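(* Let $A$ be a positive word in the band generators with $e\le A\le\delta$. Then $A$ has no decomposition $A=BaCbD$ with $B,C,D$ positive words (possibly empty), $a,b$ band generators, and $(a,b)$ an obstructing pair.
   Context: $B_n$ is the $n$-string braid group with band generators $a_{ts}=(\sigma_{t-1}\cdots\sigma_{s+1})\sigma_s(\sigma_{s+1}^{-1}\cdots\sigma_{t-1}^{-1})$, $n\ge t>s\ge1$; $e$ is the identity, and a positive word is a word in positive powers of the $a_{ts}$. $\delta=a_{n(n-1)}\cdots a_{21}$. For $V,W\in B_n$, $V\le W$ means $W=P_1VP_2$ with $P_1,P_2$ represented by positive words. An ordered pair $(a,b)$ of band generators is an obstructing pair if, for some integers $n\ge t>s>r>q\ge1$, it is one of: (1) $(a_{tr},a_{sq})$; (2) $(a_{sq},a_{tr})$; (3) $(a_{sr},a_{ts})$; (4) $(a_{ts},a_{tr})$; (5) $(a_{tr},a_{sr})$; (6) $(a_{ts},a_{ts})$ (for cases (4)-(6) only the indices appearing matter). *)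

From mathcomp Require Import all_boot.
Set Implicit Arguments.
Unset Strict Implicit.
Unset Printing Implicit Defensive.

(* A letter (i, true) is sigma_i, (i, false) is sigma_i^{-1}.             *)
Definition letter := (nat * bool)%type.
Definition bword := seq letter.

Inductive brel (n : nat) : bword -> bword -> Prop :=
| brel_inv1 i : 1 <= i -> i < n -> brel n [:: (i, true); (i, false)] [::]
| brel_inv2 i : 1 <= i -> i < n -> brel n [:: (i, false); (i, true)] [::]
| brel_comm i j : 1 <= i -> j < n -> i.+1 < j ->
    brel n [:: (i, true); (j, true)] [:: (j, true); (i, true)]
| brel_braid i : 1 <= i -> i.+1 < n ->
    brel n [:: (i, true); (i.+1, true); (i, true)]
           [:: (i.+1, true); (i, true); (i.+1, true)].

Inductive beq (n : nat) : bword -> bword -> Prop :=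
| beq_rel u x y v : brel n x y -> beq n (u ++ x ++ v) (u ++ y ++ v)
| beq_refl w : beq n w w
| beq_sym w1 w2 : beq n w1 w2 -> beq n w2 w1
| beq_trans w1 w2 w3 : beq n w1 w2 -> beq n w2 w3 -> beq n w1 w3.

(* A band generator a_{ts} is represented by the pair (t, s). *)
Definition band := (nat * nat)%type.

Definition is_band (n : nat) (a : band) : Prop := 1 <= a.2 /\ a.2 < a.1 /\ a.1 <= n.

(* a_{ts} = (sigma_{t-1} ... sigma_{s+1}) sigma_s (sigma_{s+1}^{-1} ... sigma_{t-1}^{-1}) *)
Definition band_word (a : band) : bword :=
  let t := a.1 in let s := a.2 in
  [seq (i, true) | i <- rev (iota s.+1 (t - s.+1))] ++ [:: (s, true)] ++
  [seq (i, false) | i <- iota s.+1 (t - s.+1)].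

Definition pword := seq band.

Definition is_pword (n : nat) (P : pword) : Prop := forall a, a \in P -> is_band n a.

Definition pw_braid (P : pword) : bword := flatten [seq band_word a | a <- P].

Definition delta_pw (n : nat) : pword := [seq (k.+1, k) | k <- rev (iota 1 n.-1)].

Definition ble (n : nat) (V W : bword) : Prop :=
  exists P1 P2 : pword, is_pword n P1 /\ is_pword n P2 /\
    beq n W (pw_braid P1 ++ V ++ pw_braid P2).

Definition obstructing (n : nat) (a b : band) : Prop :=
  (exists t s r q, [/\ n >= t, t > s, s > r, r > q & q >= 1] /\
     ((a, b) = ((t, r), (s, q)) \/ (a, b) = ((s, q), (t, r))
      \/ (a, b) = ((s, r), (t, s))))
  \/ (exists t s r, [/\ n >= t, t > s, s > r & r >= 1] /\
     ((a, b) = ((t, s), (t, r)) \/ (a, b) = ((t, r), (s, r))))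
  \/ (exists t s, [/\ n >= t, t > s & s >= 1] /\ (a, b) = ((t, s), (t, s))).

(* Map braids to permutations of {1, ..., n}: sigma_i goes to (i i+1), the band generator a_ts
   to (s t), and delta to the n-cycle 1 -> 2 -> ... -> n -> 1.  Exponent sums show that any
   factorisation P1 A P2 of delta has n - 1 band generators; writing A = B a C b D and moving
   a and b to the right by conjugation, delta * a_b * a_a becomes a product of n - 3
   transpositions, hence has at least 4 cycles on the n + 1 points {0, ..., n}.  On the other
   hand, multiplying the n-cycle by the transposition of b = a_ts cuts it into the arc
   {s, ..., t-1} and its complement, and for an obstructing pair (a, b) exactly one endpoint of
   a lies on that arc, so the transposition of a joins the two cycles again; with the fixed
   point 0 only 2 cycles remain. *)

From mathcomp Require Import all_boot ssralg ssrint fingroup perm zify.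
Set Implicit Arguments.
Unset Strict Implicit.
Unset Printing Implicit Defensive.
Import GroupScope.

Section TranspositionProducts.
Variable T : finType.
Implicit Types (x y z w : T) (s g : {perm T}) (L : seq (T * T)).

Lemma tperm_commute x y z w : x != z -> x != w -> y != z -> y != w ->
  commute (tperm x y) (tperm z w).
Proof.
by move=> xz xw yz yw; rewrite /commute [RHS]conjgC tpermJ !tpermD.
Qed.

Lemma mul_tperm_conj x y s : tperm x y * s * tperm x y = s ^ tperm x y.
Proof. by rewrite conjgE tpermV mulgA. Qed.

Lemma tperm_braid x y z : x != y -> y != z -> x != z ->
  tperm x y * tperm y z * tperm x y = tperm y z * tperm x y * tperm y z.
Proof.
move=> xy yz xz; rewrite !mul_tperm_conj !tpermJ tpermL tpermR.
by rewrite tpermD // 1?eq_sym // tpermD // eq_sym.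
Qed.

Definition tprod L : {perm T} := \prod_(p <- L) tperm p.1 p.2.

Lemma tprod_cons p L : tprod (p :: L) = tperm p.1 p.2 * tprod L.
Proof. by rewrite /tprod big_cons. Qed.

Lemma tprod_cat L1 L2 : tprod (L1 ++ L2) = tprod L1 * tprod L2.
Proof. by rewrite /tprod big_cat. Qed.

Lemma mul_tprod g L :
  g * tprod L = tprod [seq (g^-1 p.1, g^-1 p.2) | p <- L] * g.
Proof.
elim: L => [|p L IH]; first by rewrite /tprod !big_nil mulg1 mul1g.
have swap : g * tperm p.1 p.2 = tperm (g^-1 p.1) (g^-1 p.2) * g.
  by rewrite -tpermJ conjgE invgK mulgA mulgKV.
by rewrite /= !tprod_cons mulgA swap -!mulgA IH.
Qed.

Lemma tprod_move_tperms_right x y u v L M :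
  exists2 Z, size Z = size L + size M &
    tperm x y * tprod L * tperm u v * tprod M = tprod Z * tperm x y * tperm u v.
Proof.
rewrite -(mulgA _ (tperm u v)) (mul_tprod (tperm u v)) mulgA -(mulgA (tperm x y)).
rewrite -tprod_cat mul_tprod.
by eexists; last reflexivity; rewrite size_map size_cat size_map.
Qed.

Lemma card_porbits1 : #|porbits (1 : {perm T})| = #|T|.
Proof.
rewrite card_in_imset // => x y _ _ Exy.
have /porbitP[i ->] : x \in porbit 1 y by rewrite -Exy porbit_id.
by rewrite expg1n perm1.
Qed.

Lemma card_porbits_tprod L : #|T| <= #|porbits (tprod L)| + size L.
Proof.
elim: L => [|p L]; first by rewrite /tprod big_nil card_porbits1 addn0.
have := porbits_mul_tperm (tprod L) p.1 p.2; rewrite tprod_cons /=.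
case: (eqVneq p.1 p.2) => [->|_]; first by rewrite porbit_id /=; lia.
by case: (_ \in _); rewrite /= -addnn; lia.
Qed.

Lemma porbits_mul_tpermr s x y :
  #|porbits (s * tperm x y)| + (x \notin porbit s y).*2 = #|porbits s| + (x != y).
Proof.
by rewrite -porbitsV invMg tpermV -porbitV porbits_mul_tperm porbitsV.
Qed.

Lemma card_porbits_mul_tperm_le s x y : #|porbits (s * tperm x y)| <= #|porbits s| + 1.
Proof.
have := porbits_mul_tpermr s x y.
by case: (_ \notin _); case: (_ != _); rewrite /= -?addnn; lia.
Qed.

Lemma card_porbits_mul_tperm_lt s x y :
  x \notin porbit s y -> #|porbits (s * tperm x y)| < #|porbits s|.
Proof.
move=> xy; have := porbits_mul_tpermr s x y; rewrite xy.
by case: (_ != _); rewrite /= -?addnn; lia.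
Qed.

Lemma porbit_image s x : porbit s (s x) = porbit s x.
Proof. by have := porbit_perm s 1 x; rewrite expg1. Qed.

Lemma porbit_sub_stable s (S : {set T}) x :
  {in S, forall y, s y \in S} -> x \in S -> porbit s x \subset S.
Proof.
move=> stableS Sx; apply/subsetP => _ /porbitP[i ->].
elim: i => [|i IH]; first by rewrite expg0 perm1.
by rewrite expgSr permM stableS.
Qed.

End TranspositionProducts.

Lemma pw_braid_cat P Q : pw_braid (P ++ Q) = pw_braid P ++ pw_braid Q.
Proof. by rewrite /pw_braid map_cat flatten_cat. Qed.

Lemma is_pword_cons n a P : is_band n a -> is_pword n P -> is_pword n (a :: P).
Proof. by move=> ha hP x; rewrite inE => /predU1P[->|/hP]. Qed.

Lemma is_pword_cat n P Q : is_pword n P -> is_pword n Q -> is_pword n (P ++ Q).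
Proof. by move=> hP hQ x; rewrite mem_cat => /orP[/hP|/hQ]. Qed.

Lemma is_pword_delta_pw n : is_pword n (delta_pw n).
Proof.
by move=> x /mapP[k]; rewrite mem_rev mem_iota => hk ->; rewrite /is_band /=; lia.
Qed.

Section ExponentSum.
Import GRing.Theory.
Local Open Scope ring_scope.

Definition exponent_sum (w : bword) : int := \sum_(l <- w) (if l.2 then 1 else -1).

Lemma exponent_sum_cat u v : exponent_sum (u ++ v) = exponent_sum u + exponent_sum v.
Proof. by rewrite /exponent_sum big_cat. Qed.

Lemma beq_exponent_sum n w1 w2 : beq n w1 w2 -> exponent_sum w1 = exponent_sum w2.
Proof.
elim=> [u x y v hxy|w|w1' w2' _ ->|w1' w2' w3' _ -> _ ->] //.
rewrite !exponent_sum_cat /exponent_sum; congr (_ + (_ + _)).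
by case: hxy => *; rewrite !big_cons !big_nil /=; lia.
Qed.

Lemma exponent_sum_const b (r : seq nat) :
  exponent_sum [seq (i, b) | i <- r] = (if b then 1 else -1) *+ size r.
Proof.
elim: r => [|i r IH]; first by rewrite /exponent_sum big_nil.
by rewrite /exponent_sum big_cons -/(exponent_sum _) IH mulrS.
Qed.

Lemma exponent_sum_band_word a : exponent_sum (band_word a) = 1.
Proof.
rewrite /band_word !exponent_sum_cat !exponent_sum_const size_rev.
by rewrite /exponent_sum big_cons big_nil /= addr0 addrCA mulNrn subrr addr0.
Qed.

Lemma exponent_sum_pw_braid P : exponent_sum (pw_braid P) = (size P)%:Z.
Proof.
elim: P => [|a P IH]; first by rewrite /exponent_sum big_nil.
by rewrite /pw_braid /= -/(pw_braid P) exponent_sum_cat IH exponent_sum_band_word; lia.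
Qed.

Lemma beq_pw_braid_size n P Q : beq n (pw_braid P) (pw_braid Q) -> size P = size Q.
Proof. by move/beq_exponent_sum; rewrite !exponent_sum_pw_braid => -[]. Qed.

End ExponentSum.

Section PermutationRepresentation.
Variable n : nat.
Notation T := 'I_n.+1.

(* sigma_i and sigma_i^-1 both act as the transposition (i i+1); the point 0 of 'I_n.+1 stays
   fixed throughout. *)
Definition sigma_perm (l : letter) : {perm T} := tperm (inord l.1) (inord l.1.+1).

Definition word_perm (w : bword) : {perm T} := \prod_(l <- w) sigma_perm l.

Lemma word_perm_cat u v : word_perm (u ++ v) = word_perm u * word_perm v.
Proof. by rewrite /word_perm big_cat. Qed.

Lemma inord_eq x y : x <= n -> y <= n -> (inord x == inord y :> T) = (x == y).
Proof.
move=> hx hy; apply/eqP/eqP => [/(congr1 val)|->//].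
by rewrite /= !inordK.
Qed.

Lemma val_tperm_inord u v (x : T) : u <= n -> v <= n ->
  nat_of_ord (tperm (inord u) (inord v) x) =
    if x == u :> nat then v else if x == v :> nat then u else x.
Proof.
move=> hu hv; case: tpermP => [->|->|ne_u ne_v] /=; rewrite ?inordK ?eqxx //.
- by case: eqP => [->|].
have nat_ne w : w <= n -> x <> inord w -> (val x == w) = false.
  by move=> hw ne_w; apply/eqP => eq_w; apply: ne_w; rewrite -eq_w inord_val.
by rewrite !nat_ne.
Qed.

Lemma brel_word_perm x y : brel n x y -> word_perm x = word_perm y.
Proof.
rewrite /word_perm /sigma_perm.
case=> [i _ _|i _ _|i j hi hj hij|i hi hin]; rewrite !big_cons !big_nil /= ?mulg1.
- by rewrite tperm2.
- by rewrite tperm2.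
- by apply: tperm_commute; rewrite inord_eq; lia.
- by rewrite !mulgA tperm_braid // inord_eq; lia.
Qed.

Lemma beq_word_perm w1 w2 : beq n w1 w2 -> word_perm w1 = word_perm w2.
Proof.
elim=> [u x y v /brel_word_perm E|w|w1' w2' _ ->|w1' w2' w3' _ -> _ ->] //.
by rewrite !word_perm_cat E.
Qed.

Definition band_points (a : band) : T * T := (inord a.2, inord a.1).

Lemma band_word_succ t s : s < t ->
  band_word (t.+1, s) = (t, true) :: band_word (t, s) ++ [:: (t, false)].
Proof.
move=> st; rewrite /band_word /=.
have -> : t.+1 - s.+1 = (t - s.+1) + 1 by lia.
rewrite iotaD rev_cat !map_cat /= -!catA /=.
by have -> : s.+1 + (t - s.+1) = t by lia.
Qed.

Lemma word_perm_band_word a : is_band n a ->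
  word_perm (band_word a) = tperm (inord a.2) (inord a.1).
Proof.
case: a => t s [/= s_gt0 [st tn]]; elim: t st tn => [//|t IH] st tn.
case: (eqVneq s t) => [<-|ts].
  by rewrite /band_word /= subnn /word_perm big_cons big_nil mulg1.
rewrite band_word_succ; last lia.
rewrite /word_perm big_cons -/(word_perm _) word_perm_cat IH; [|lia|lia].
rewrite /word_perm big_cons big_nil mulg1 mulgA mul_tperm_conj tpermJ /=.
by rewrite tpermL tpermD // inord_eq; lia.
Qed.

Lemma word_perm_pw_braid P : is_pword n P ->
  word_perm (pw_braid P) = tprod [seq band_points a | a <- P].
Proof.
elim: P => [|a P IH] hP; first by rewrite /word_perm /tprod !big_nil.
rewrite /= tprod_cons /pw_braid /= -/(pw_braid P) word_perm_cat.
rewrite word_perm_band_word ?IH //; last by apply: hP; rewrite mem_head.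
by move=> b Pb; apply: hP; rewrite in_cons Pb orbT.
Qed.

Definition delta_prefix (m : nat) : pword := [seq (k.+1, k) | k <- rev (iota 1 m)].

Lemma val_delta_prefix_perm m (x : T) : m < n ->
  nat_of_ord (tprod [seq band_points a | a <- delta_prefix m] x) =
    if 0 < x <= m then x.+1 else if x == m.+1 :> nat then 1%N else x.
Proof.
elim: m x => [|m IH] x mn.
  by rewrite /tprod big_nil perm1; repeat case: ifP; move=> *; lia.
rewrite /delta_prefix -[m.+1]addn1 iotaD rev_cat /= -/(delta_prefix m) tprod_cons permM.
rewrite IH; last lia.
rewrite /= val_tperm_inord; [|lia|lia].
by repeat case: ifP; move=> *; lia.
Qed.

Definition delta_perm : {perm T} := tprod [seq band_points a | a <- delta_pw n].

Lemma delta_perm_succ x : 0 < x < n -> delta_perm (inord x) = inord x.+1.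
Proof.
move=> hx; apply: val_inj => /=.
rewrite /delta_perm -/(delta_prefix n.-1) val_delta_prefix_perm; last lia.
by rewrite !inordK ?ifT //; lia.
Qed.

Lemma porbit_delta_perm x : 0 < x <= n ->
  porbit delta_perm (inord x) = porbit delta_perm (inord 1).
Proof.
elim: x => [//|[//|x] IH] hx.
rewrite -delta_perm_succ; last lia.
by rewrite porbit_image IH //; lia.
Qed.

Lemma card_porbits_delta_perm : #|porbits delta_perm| <= 2.
Proof.
apply: (@leq_trans #|[set porbit delta_perm ord0; porbit delta_perm (inord 1)]|).
  apply/subset_leq_card/subsetP => _ /imsetP[x _ ->]; rewrite !inE.
  case: (posnP x) => [x0|x_gt0]; first by rewrite (_ : x = ord0) ?eqxx //; apply: val_inj.
  have xn : x <= n by rewrite -ltnS.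
  by rewrite -[x]inord_val porbit_delta_perm ?eqxx ?orbT // x_gt0.
by rewrite cards2; case: eqP.
Qed.

Definition band_arc (b : band) : {set T} := [set x : T | b.2 <= x < b.1].

Lemma band_arc_stable b : is_band n b ->
  {in band_arc b, forall x, (delta_perm * tperm (inord b.2) (inord b.1)) x \in band_arc b}.
Proof.
case: b => t s [/= s_gt0 [st tn]] x; rewrite !inE /= permM => /andP[sx xt].
rewrite -[x]inord_val delta_perm_succ; last lia.
rewrite val_tperm_inord ?inordK; try lia.
by repeat case: ifP; move=> *; lia.
Qed.

Lemma obstructing_separates a b : obstructing n a b ->
  (inord a.2 \in band_arc b) != (inord a.1 \in band_arc b).
Proof.
rewrite !inE.
case=> [[t [s [r [q [[? ? ? ? ?] [|[|]]]]]]]|[[t [s [r [[? ? ? ?] [|]]]]]|[t [s [[? ? ?]]]]]];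
  case=> -> ->; rewrite /= !inordK; lia.
Qed.

Lemma card_porbits_obstructing a b : is_band n b -> obstructing n a b ->
  #|porbits (delta_perm * tperm (inord b.2) (inord b.1) * tperm (inord a.2) (inord a.1))|
    <= 2.
Proof.
move=> hb hab; set s := delta_perm * _.
have apart : inord a.2 \notin porbit s (inord a.1).
  have := obstructing_separates hab; have stable := band_arc_stable hb.
  case a1_in : (inord a.1 \in _); case a2_in : (inord a.2 \in _) => // _.
    by apply: contraFN a2_in; apply/subsetP/porbit_sub_stable.
  by rewrite porbit_sym; apply: contraFN a1_in; apply/subsetP/porbit_sub_stable.
rewrite -ltnS (leq_trans (card_porbits_mul_tperm_lt apart)) //.
by rewrite (leq_trans (card_porbits_mul_tperm_le _ _ _)) // addn1 ltnS card_porbits_delta_perm.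
Qed.

Lemma beq_cat u v w1 w2 : beq n w1 w2 -> beq n (u ++ w1 ++ v) (u ++ w2 ++ v).
Proof.
elim=> [u' x y v' hxy|w|w1' w2' _|w1' w2' w3' _ h12 _ h23].
- have regroup w : u ++ (u' ++ w ++ v') ++ v = (u ++ u') ++ w ++ (v' ++ v).
    by rewrite -!catA.
  by rewrite !regroup; apply: beq_rel.
- exact: beq_refl.
- exact: beq_sym.
- exact: beq_trans h12 h23.
Qed.

Lemma ble_beq V V' W : beq n V V' -> ble n V W -> ble n V' W.
Proof.
move=> hV [P1 [P2 [hP1 [hP2 hW]]]]; exists P1, P2; split=> //; split=> //.
exact: beq_trans hW (beq_cat _ _ hV).
Qed.

Lemma ble_delta_perm W : is_pword n W -> ble n (pw_braid W) (pw_braid (delta_pw n)) ->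
  exists L R : seq (T * T), size L + size W + size R = n.-1 /\
    delta_perm = tprod L * tprod [seq band_points a | a <- W] * tprod R.
Proof.
move=> hW [P1 [P2 [hP1 [hP2 hdelta]]]].
exists [seq band_points a | a <- P1], [seq band_points a | a <- P2]; split.
  have -> : n.-1 = size (delta_pw n) by rewrite size_map size_rev size_iota.
  rewrite -!pw_braid_cat in hdelta.
  by rewrite (beq_pw_braid_size hdelta) !size_cat !size_map addnA.
rewrite /delta_perm -word_perm_pw_braid; last exact: is_pword_delta_pw.
by rewrite (beq_word_perm hdelta) !word_perm_cat !word_perm_pw_braid // mulgA.
Qed.

End PermutationRepresentation.

Theorem lemma3p3 (n : nat) (A : pword) :
  is_pword n A ->
  ble n [::] (pw_braid A) ->
  ble n (pw_braid A) (pw_braid (delta_pw n)) ->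
  ~ (exists (B C D : pword) (a b : band),
       [/\ is_pword n B, is_pword n C, is_pword n D, is_band n a & is_band n b]
       /\ obstructing n a b
       /\ beq n (pw_braid A) (pw_braid (B ++ a :: C ++ b :: D))).
Proof.
(* A enters only through its equality with B a C b D, so e <= A and positivity of A are unused. *)
move=> _ _ hle [B [C [D [a [b [[hB hC hD ha hb] [hab hA]]]]]]].
have hM : is_pword n (B ++ a :: C ++ b :: D).
  by apply/is_pword_cat/is_pword_cons/is_pword_cat/is_pword_cons.
have [L [R [hsize hdelta]]] := ble_delta_perm hM (ble_beq hA hle).
set pts := map (band_points n) in hdelta.
have [Z hZ eZ] := tprod_move_tperms_right (inord a.2) (inord a.1) (inord b.2) (inord b.1)
  (pts C) (pts D ++ R).
have hprod : delta_perm n * tperm (inord b.2) (inord b.1) * tperm (inord a.2) (inord a.1)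
    = tprod (L ++ pts B ++ Z).
  rewrite hdelta /pts; do 2 rewrite ?map_cat ?tprod_cat /= ?tprod_cons.
  rewrite -!mulgA; congr (_ * (_ * _)); rewrite tprod_cat !mulgA in eZ; rewrite !mulgA eZ.
  set tb := tperm (inord b.2) _.
  by rewrite -(mulgA _ tb tb) tperm2 mulg1 -mulgA tperm2 mulg1.
have := leq_add (card_porbits_obstructing hb hab) (leqnn (size (L ++ pts B ++ Z))).
rewrite hprod => /(leq_trans (card_porbits_tprod _)); rewrite card_ord.
move: hsize; rewrite !size_cat hZ !size_cat /= size_cat /= !size_map; lia.
Qed.
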